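(* Let $(A,\mathfrak m)$ be a local Noetherian normal integral domain, and let $I_1,I_2,\dots$ be nonzero prime ideals of $A$ with $\lim_{n\to\infty}I_n=0$ in the $\mathfrak m$-adic topology. Set $P=\prod_n A/I_n$ and $S=\bigoplus_n A/I_n\subseteq P$. If $M$ is a finitely generated $A$-module with $\operatorname{Hom}_A(M,A/I_n)\cong A/I_n$ for all $n$, then $\operatorname{Hom}_A(M,P/S)\cong P/S$.
   Context: $\lim_{n\to\infty}I_n=0$ in the $\mathfrak m$-adic topology means: for every $i\ge1$ there is $n_i$ such that $I_n\subseteq\mathfrak m^i$ for all $n\ge n_i$. *)

From HB Require Import structures.
From mathcomp Require Import all_boot all_algebra.
From mathcomp Require Import boolp.
From Stdlib Require Import ClassicalEpsilon.
Set Implicit Arguments.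
Unset Strict Implicit.
Unset Printing Implicit Defensive.
Import GRing.Theory.
Local Open Scope ring_scope.

Section Quotient.
Variables (R : pzRingType) (V : lmodType R) (W : V -> Prop).

Definition span_of (x : V) : Prop :=
  exists n (c : 'I_n -> R) (w : 'I_n -> V),
    (forall i, W (w i)) /\ x = \sum_(i < n) c i *: w i.

Lemma span_of0 : span_of 0.
Proof. by exists 0%N, (fun _ => 0), (fun _ => 0); split; [case | rewrite big_ord0]. Qed.

Lemma span_ofD x y : span_of x -> span_of y -> span_of (x + y).
Proof.
move=> [n [c [w [Hw ->]]]] [m [d [u [Hu ->]]]].
exists (n + m)%N, (fun i => match split i with inl j => c j | inr j => d j end),
  (fun i => match split i with inl j => w j | inr j => u j end); split.
  by move=> i; case: (split i).
rewrite big_split_ord /=; congr (_ + _); apply: eq_bigr => i _.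
  by have /= -> := unsplitK (inl i : 'I_n + 'I_m).
by have /= -> := unsplitK (inr i : 'I_n + 'I_m).
Qed.

Lemma span_ofZ a x : span_of x -> span_of (a *: x).
Proof.
move=> [n [c [w [Hw ->]]]]; exists n, (fun i => a * c i), w; split => //.
by rewrite scaler_sumr; apply: eq_bigr => i _; rewrite scalerA.
Qed.

Lemma span_ofN x : span_of x -> span_of (- x).
Proof. by move=> /(span_ofZ (-1)); rewrite scaleN1r. Qed.

Definition qrel (x y : V) : Prop := span_of (x - y).

Lemma qrel_refl x : qrel x x.
Proof. by rewrite /qrel subrr; apply: span_of0. Qed.

Lemma qrel_sym x y : qrel x y -> qrel y x.
Proof. by rewrite /qrel => /span_ofN; rewrite opprB. Qed.

Lemma qrel_trans x y z : qrel x y -> qrel y z -> qrel x z.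
Proof.
by rewrite /qrel => H1 H2; have := span_ofD H1 H2; rewrite addrA subrK.
Qed.

Definition canon (x : V) : V := epsilon (inhabits x) (qrel x).

Lemma qrel_canon x : qrel x (canon x).
Proof. by rewrite /canon; apply: epsilon_spec; exists x; apply: qrel_refl. Qed.

Lemma canon_eq x y : qrel x y -> canon x = canon y.
Proof.
move=> Hxy; rewrite /canon.
have -> : qrel x = qrel y.
  apply: funext => z; apply: propext; split => H.
    exact: qrel_trans (qrel_sym Hxy) H.
  exact: qrel_trans Hxy H.
by congr epsilon; apply: proof_irrelevance.
Qed.

Lemma canon_idem x : canon (canon x) == canon x.
Proof. by apply/eqP; apply/esym/canon_eq/qrel_canon. Qed.

(* the quotient module V / <W>, elements are canonical representatives *)
Record qmod := QMod { qval : V; _ : canon qval == qval }.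
HB.instance Definition _ := [isSub for qval].
HB.instance Definition _ := [Choice of qmod by <:].

Definition qpi (x : V) : qmod := QMod (canon_idem x).

Lemma qpi_eq x y : qrel x y -> qpi x = qpi y.
Proof. by move=> H; apply: val_inj; rewrite /= (canon_eq H). Qed.

Lemma qvalK u : qpi (qval u) = u.
Proof. by case: u => x Hx; apply: val_inj => /=; apply/eqP. Qed.

Lemma qrel_qval x : qrel (qval (qpi x)) x.
Proof. exact/qrel_sym/qrel_canon. Qed.

Definition qzero := qpi 0.
Definition qadd u v := qpi (qval u + qval v).
Definition qopp u := qpi (- qval u).
Definition qscale a u := qpi (a *: qval u).

Lemma qaddE x y : qadd (qpi x) (qpi y) = qpi (x + y).
Proof.
apply: qpi_eq; rewrite /qrel opprD addrACA.
by apply: span_ofD; apply: qrel_qval.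
Qed.

Lemma qoppE x : qopp (qpi x) = qpi (- x).
Proof. by apply: qpi_eq; rewrite /qrel -opprD; apply/span_ofN/qrel_qval. Qed.

Lemma qscaleE a x : qscale a (qpi x) = qpi (a *: x).
Proof. by apply: qpi_eq; rewrite /qrel -scalerBr; apply/span_ofZ/qrel_qval. Qed.

Lemma qaddA : associative qadd.
Proof.
move=> u v w; rewrite -[u]qvalK -[v]qvalK -[w]qvalK.
by rewrite !qaddE addrA.
Qed.

Lemma qaddC : commutative qadd.
Proof. by move=> u v; rewrite -[u]qvalK -[v]qvalK !qaddE addrC. Qed.

Lemma qadd0 : left_id qzero qadd.
Proof. by move=> u; rewrite -[u]qvalK /qzero qaddE add0r. Qed.

Lemma qaddN : left_inverse qzero qopp qadd.
Proof. by move=> u; rewrite -[u]qvalK qoppE qaddE addNr. Qed.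

HB.instance Definition _ := GRing.isZmodule.Build qmod qaddA qaddC qadd0 qaddN.

Lemma qaddE' x y : qpi x + qpi y = qpi (x + y).
Proof. exact: qaddE. Qed.

Lemma qscaleA a b u : qscale a (qscale b u) = qscale (a * b) u.
Proof. by rewrite -[u]qvalK !qscaleE scalerA. Qed.

Lemma qscale1 : left_id 1 qscale.
Proof. by move=> u; rewrite -[u]qvalK qscaleE scale1r. Qed.

Lemma qscaleDr : right_distributive qscale +%R.
Proof.
move=> a u v; rewrite -[u]qvalK -[v]qvalK.
by rewrite qaddE' !qscaleE qaddE' scalerDr.
Qed.

Lemma qscaleDl v : {morph qscale^~ v : a b / a + b}.
Proof.
by move=> a b; rewrite -[v]qvalK !qscaleE qaddE' scalerDl.
Qed.

HB.instance Definition _ :=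
  GRing.Zmodule_isLmodule.Build R qmod qscaleA qscale1 qscaleDr qscaleDl.

End Quotient.

Section Product.
Variables (R : pzRingType) (F : nat -> lmodType R).

Definition dprod := forall n, F n.
HB.instance Definition _ := gen_eqMixin dprod.
HB.instance Definition _ := gen_choiceMixin dprod.

Definition pzero : dprod := fun n => 0.
Definition padd (x y : dprod) : dprod := fun n => x n + y n.
Definition popp (x : dprod) : dprod := fun n => - x n.
Definition pscale (a : R) (x : dprod) : dprod := fun n => a *: x n.

Lemma paddA : associative padd.
Proof. by move=> x y z; apply: functional_extensionality_dep => n; rewrite /padd addrA. Qed.
Lemma paddC : commutative padd.
Proof. by move=> x y; apply: functional_extensionality_dep => n; rewrite /padd addrC. Qed.
Lemma padd0 : left_id pzero padd.
Proof. by move=> x; apply: functional_extensionality_dep => n; rewrite /padd add0r. Qed.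
Lemma paddN : left_inverse pzero popp padd.
Proof. by move=> x; apply: functional_extensionality_dep => n; rewrite /padd addNr. Qed.

HB.instance Definition _ := GRing.isZmodule.Build dprod paddA paddC padd0 paddN.

Lemma pscaleA a b x : pscale a (pscale b x) = pscale (a * b) x.
Proof. by apply: functional_extensionality_dep => n; rewrite /pscale scalerA. Qed.
Lemma pscale1 : left_id 1 pscale.
Proof. by move=> x; apply: functional_extensionality_dep => n; rewrite /pscale scale1r. Qed.
Lemma pscaleDr : right_distributive pscale +%R.
Proof. by move=> a x y; apply: functional_extensionality_dep => n; rewrite /pscale /= /padd scalerDr. Qed.
Lemma pscaleDl x : {morph pscale^~ x : a b / a + b}.
Proof. by move=> a b; apply: functional_extensionality_dep => n; rewrite /pscale /= /padd scalerDl. Qed.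

HB.instance Definition _ :=
  GRing.Zmodule_isLmodule.Build R dprod pscaleA pscale1 pscaleDr pscaleDl.

Definition dsum (x : dprod) : Prop := exists N, forall n, (N <= n)%N -> x n = 0.

End Product.

(* Hom_A(M, N) ~= N as A-modules: an A-linear bijection between the module  *)
(* of A-linear maps M -> N (pointwise operations) and N.                    *)
Definition hom_iso_self (R : pzRingType) (M N : lmodType R) : Prop :=
  exists Phi : {linear M -> N} -> N,
    bijective Phi /\
    (forall f g h : {linear M -> N}, (forall x, h x = f x + g x) ->
       Phi h = Phi f + Phi g) /\
    (forall (a : R) (f h : {linear M -> N}), (forall x, h x = a *: f x) ->
       Phi h = a *: Phi f).

Definition finitely_generated (R : pzRingType) (M : lmodType R) : Prop :=
  exists s : seq M, forall x : M,
    exists c : 'I_(size s) -> R, x = \sum_(i < size s) c i *: s`_i.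

Section Ideals.
Variable A : comUnitRingType.

Definition is_ideal (I : A -> Prop) : Prop :=
  I 0 /\ (forall x y, I x -> I y -> I (x + y)) /\ (forall a x, I x -> I (a * x)).

Definition is_prime_ideal (I : A -> Prop) : Prop :=
  is_ideal I /\ ~ I 1 /\ (forall x y, I (x * y) -> I x \/ I y).

Definition is_maximal_ideal (I : A -> Prop) : Prop :=
  is_ideal I /\ ~ I 1 /\
  (forall J, is_ideal J -> (forall x, I x -> J x) -> (forall x, J x <-> I x) \/ J 1).

Definition local_ring_with (m : A -> Prop) : Prop :=
  is_maximal_ideal m /\ (forall J, is_maximal_ideal J -> forall x, J x <-> m x).

Definition noetherian_ring : Prop :=
  forall I : A -> Prop, is_ideal I ->
    exists s : seq A, forall x, I x <->
      exists c : 'I_(size s) -> A, x = \sum_(i < size s) c i * s`_i.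

Definition ideal_mul (I J : A -> Prop) (x : A) : Prop :=
  exists n (a b : 'I_n -> A), (forall k, I (a k)) /\ (forall k, J (b k)) /\
    x = \sum_(k < n) a k * b k.

Fixpoint ideal_pow (I : A -> Prop) (i : nat) : A -> Prop :=
  if i is i'.+1 then ideal_mul (ideal_pow I i') I else (fun _ => True).

Definition madic_lim0 (m : A -> Prop) (I : nat -> A -> Prop) : Prop :=
  forall i, (1 <= i)%N -> exists ni, forall n, (ni <= n)%N ->
    forall x, I n x -> ideal_pow m i x.

End Ideals.

Definition normal_domain (A : idomainType) : Prop :=
  forall z : {fraction A},
    (exists p : {poly A}, p \is monic /\ root (map_poly (@tofrac A) p) z) ->
    exists a : A, z = @tofrac A a.

Definition quot_ring_mod (A : comUnitRingType) (I : A -> Prop) : lmodType A :=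
  @qmod A A^o I.

From HB Require Import structures.
From mathcomp Require Import all_boot all_algebra.
From mathcomp Require Import boolp.
Import GRing.Theory.
Set Implicit Arguments.
Unset Strict Implicit.
Local Open Scope ring_scope.

(* Lift the images of generators s_i of M under f : M -> P/S to p_i in P.
   Since A is Noetherian, the combinations of the p_i that lie in S all vanish
   beyond one common index N, so sum c_i s_i |-> sum c_i p_i, with its
   coordinates below N discarded, is a well-defined linear lift M -> P of f.
   Applying the isomorphisms Hom(M, A/I_n) = A/I_n coordinatewise to a lift
   gives an element of P, well defined modulo S because two lifts differ by a
   map M -> S, which by finite generation of M vanishes beyond some index. *)

Lemma linear_ext (R : pzRingType) (U V : lmodType R) (f g : {linear U -> V}) :
  f =1 g -> f = g.
Proof.
move=> /funext eq_fg; case: f g eq_fg => [f cf] [g cg] /= eq_fg.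
subst g; congr GRing.Linear.Pack.
case: cf cg => [[af] [sf]] [[ag] [sg]].
by rewrite (Prop_irrelevance af ag) (Prop_irrelevance sf sg).
Qed.

Section QuotientModule.
Variables (R : pzRingType) (V : lmodType R) (W : V -> Prop).

Fact qpi_is_linear : linear (qpi W).
Proof. by move=> a x y; rewrite -qaddE' -qscaleE. Qed.

HB.instance Definition _ :=
  GRing.isLinear.Build R V (qmod W) *:%R (qpi W) qpi_is_linear.

Lemma qpi_eqP x y : qpi W x = qpi W y <-> qrel W x y.
Proof.
split=> [/(congr1 val) /= eq_xy | /qpi_eq //].
apply: qrel_trans (qrel_canon W x) _; rewrite eq_xy; exact/qrel_sym/qrel_canon.
Qed.

Hypotheses (W0 : W 0) (WD : forall x y, W x -> W y -> W (x + y))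
  (WZ : forall a x, W x -> W (a *: x)).

Lemma span_of_submod x : span_of W x <-> W x.
Proof.
split=> [[n [c [w [Ww ->]]]] | Wx].
  by apply: (big_ind W) => // i _; apply: WZ.
by exists 1%N, (fun=> 1), (fun=> x); split; rewrite // big_ord1 scale1r.
Qed.

Lemma qpi_eq_submod x y : qpi W x = qpi W y <-> W (x - y).
Proof. by rewrite qpi_eqP; exact: span_of_submod. Qed.

End QuotientModule.

Section Product.
Variables (R : pzRingType) (F : nat -> lmodType R).
Local Notation P := (dprod F).
Local Notation S := (@dsum R F).

Definition dproj n (x : P) : F n := x n.

Fact dproj_is_linear n : linear (dproj n).
Proof. by []. Qed.

HB.instance Definition _ n :=
  GRing.isLinear.Build R P (F n) *:%R (dproj n) (dproj_is_linear n).

Lemma dprodD (x y : P) n : (x + y) n = x n + y n. Proof. by []. Qed.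
Lemma dprodB (x y : P) n : (x - y) n = x n - y n. Proof. by []. Qed.
Lemma dprodZ a (x : P) n : (a *: x) n = a *: x n. Proof. by []. Qed.

Definition vanish_from N (x : P) : Prop := forall n, (N <= n)%N -> x n = 0.

Lemma vanish_from0 N : vanish_from N 0.
Proof. by []. Qed.

Lemma vanish_fromD N x y :
  vanish_from N x -> vanish_from N y -> vanish_from N (x + y).
Proof. by move=> x0 y0 n le_Nn; rewrite dprodD x0 ?y0 ?addr0. Qed.

Lemma vanish_fromZ N a x : vanish_from N x -> vanish_from N (a *: x).
Proof. by move=> x0 n le_Nn; rewrite dprodZ x0 ?scaler0. Qed.

Lemma vanish_from_mono N N' x :
  (N <= N')%N -> vanish_from N x -> vanish_from N' x.
Proof. by move=> le_NN' x0 n le_N'n; apply: x0 (leq_trans le_NN' le_N'n). Qed.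

Lemma qpi_dsumP (x y : P) : qpi S x = qpi S y <-> S (x - y).
Proof.
apply: qpi_eq_submod => [|{}x {}y [N x0] [N' y0] | a {}x [N x0]].
- by exists 0%N.
- exists (maxn N N'); apply: vanish_fromD.
    exact: vanish_from_mono (leq_maxl N N') x0.
  exact: vanish_from_mono (leq_maxr N N') y0.
- by exists N; apply: vanish_fromZ.
Qed.

Definition trunc N (x : P) : P := fun n => if (N <= n)%N then x n else 0.

Fact trunc_is_linear N : linear (trunc N).
Proof.
move=> a x y; apply: functional_extensionality_dep => n.
by rewrite dprodD dprodZ /trunc; case: ifP; rewrite ?scaler0 ?addr0.
Qed.

HB.instance Definition _ N :=
  GRing.isLinear.Build R P P *:%R (trunc N) (trunc_is_linear N).

Lemma qpi_trunc N x : qpi S (trunc N x) = qpi S x.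
Proof.
by apply/qpi_dsumP; exists N => n le_Nn; rewrite dprodB /trunc le_Nn subrr.
Qed.

Lemma trunc_vanish N x : vanish_from N x -> trunc N x = 0.
Proof.
move=> x0; apply: functional_extensionality_dep => n.
by rewrite /trunc; case: ifP => // /x0.
Qed.

End Product.

Lemma scale_lincomb_sum (R : pzRingType) (V : lmodType R) m k
    (d : 'I_m -> R) (w : 'I_m -> 'I_k -> R) (p : 'I_k -> V) :
  \sum_(j < m) d j *: \sum_(i < k) w j i *: p i =
  \sum_(i < k) (\sum_(j < m) d j * w j i) *: p i.
Proof.
under eq_bigr do rewrite scaler_sumr.
rewrite exchange_big; apply: eq_bigr => i _.
by rewrite scaler_suml; apply: eq_bigr => j _; rewrite scalerA.
Qed.

Section AscendingUnion.
Variables (A : comUnitRingType) (V : lmodType A) (C : nat -> V -> Prop).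
Hypotheses (C0 : forall N, C N 0)
  (CD : forall N x y, C N x -> C N y -> C N (x + y))
  (CZ : forall N a x, C N x -> C N (a *: x))
  (C_mono : forall N N' x, (N <= N')%N -> C N x -> C N' x).

Let U x := exists N, C N x.

Lemma union_chainD x y : U x -> U y -> U (x + y).
Proof.
move=> [N Cx] [N' Cy]; exists (maxn N N'); apply: CD.
  exact: C_mono (leq_maxl N N') Cx.
exact: C_mono (leq_maxr N N') Cy.
Qed.

Lemma union_chainZ a x : U x -> U (a *: x).
Proof. by move=> [N Cx]; exists N; apply: CZ. Qed.

Lemma union_chain_sum (J : Type) (r : seq J) (Q : pred J) (G : J -> V) :
  (forall j, Q j -> U (G j)) -> U (\sum_(j <- r | Q j) G j).
Proof.
by move=> UG; apply: big_ind => //; [exists 0%N | apply: union_chainD].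
Qed.

Lemma fg_image_in_chain (M : lmodType A) (g : {linear M -> V}) :
  finitely_generated M -> (forall x, U (g x)) -> exists N, forall x, C N (g x).
Proof.
move=> [s gen_s] Ug; have /choice [Ns Cgs] : forall j : 'I_(size s),
    exists N, C N (g s`_j) by move=> j; apply: Ug.
exists (\max_(j < size s) Ns j) => x; have [c ->] := gen_s x.
rewrite linear_sum; apply: big_ind => [||j _]; [exact: C0 | exact: CD |].
by rewrite linearZ; apply/CZ/(C_mono (leq_bigmax j))/Cgs.
Qed.

Definition last_coefs k (p : 'I_k.+1 -> V) (a : A) : Prop :=
  exists c : 'I_k.+1 -> A, U (\sum_(i < k.+1) c i *: p i) /\ c ord_max = a.

Lemma last_coefs_ideal k (p : 'I_k.+1 -> V) : is_ideal (last_coefs p).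
Proof.
split; [|split].
- exists (fun=> 0); split=> //; exists 0%N.
  by rewrite big1 // => i _; rewrite scale0r.
- move=> _ _ [c [Uc <-]] [c' [Uc' <-]]; exists (fun i => c i + c' i); split=> //.
  under eq_bigr do rewrite scalerDl.
  by rewrite big_split; apply: union_chainD.
- move=> a _ [c [Uc <-]]; exists (fun i => a * c i); split=> //.
  under eq_bigr do rewrite -scalerA.
  by rewrite -scaler_sumr; apply: union_chainZ.
Qed.

Lemma noetherian_lincomb_in_chain k (p : 'I_k -> V) :
  noetherian_ring A -> exists N, forall c : 'I_k -> A,
    U (\sum_(i < k) c i *: p i) -> C N (\sum_(i < k) c i *: p i).
Proof.
move=> noeth; elim: k p => [|k IH] p.
  by exists 0%N => c _; rewrite big_ord0.
(* The last coefficients of relations form a finitely generated ideal;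
   subtracting the relations realising its generators leaves a relation with
   last coefficient 0, to which the induction hypothesis applies. *)
have [N0 CN0] := IH (fun i => p (widen_ord (leqnSn k) i)).
have [gens gensP] := noeth _ (last_coefs_ideal p).
have /choice [w wP] : forall j : 'I_(size gens), last_coefs p gens`_j.
  move=> j; apply/gensP; exists (fun i => (i == j)%:R).
  by rewrite (bigD1 j) //= eqxx mul1r big1 ?addr0 // => i /negPf ->; rewrite mul0r.
pose W j := \sum_(i < k.+1) w j i *: p i.
have /choice [Nw CNw] : forall j, exists Nj, C Nj (W j).
  by move=> j; case: (wP j) => -[Nj CW] _; exists Nj.
exists (maxn N0 (\max_(j < size gens) Nw j)) => c Uc.
have [d last_c] := proj1 (gensP _) (ex_intro _ c (conj Uc erefl)).
pose c' i := c i - \sum_(j < size gens) d j * w j i.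
have c'E : \sum_(i < k.+1) c' i *: p i =
           \sum_(i < k.+1) c i *: p i - \sum_(j < size gens) d j *: W j.
  by rewrite scale_lincomb_sum -sumrB; apply: eq_bigr => i _; rewrite scalerBl.
have Uc' : U (\sum_(i < k.+1) c' i *: p i).
  rewrite c'E -scaleN1r; apply/union_chainD/union_chainZ/union_chain_sum => //.
  by move=> j _; apply: union_chainZ; case: (wP j).
have last_c' : c' ord_max = 0.
  rewrite /c' last_c; apply/eqP; rewrite subr_eq0; apply/eqP.
  by apply: eq_bigr => j _; case: (wP j) => _ ->.
rewrite -[\sum_(i < k.+1) _](subrK (\sum_(j < size gens) d j *: W j)) -c'E.
apply: CD.
  move: Uc'; rewrite big_ord_recr /= last_c' scale0r addr0 => /CN0.
  by apply: C_mono; apply: leq_maxl.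
apply: big_ind => [||j _]; [exact: C0 | exact: CD |].
apply/CZ/(C_mono _ (CNw j))/(leq_trans (leq_bigmax j)); exact: leq_maxr.
Qed.

End AscendingUnion.

Section Lift.
Variables (A : comUnitRingType) (F : nat -> lmodType A) (M : lmodType A).
Local Notation P := (dprod F).
Local Notation S := (@dsum A F).
Hypothesis noeth : noetherian_ring A.
Variables (s : seq M)
  (gen_s : forall x : M,
     exists c : 'I_(size s) -> A, x = \sum_(i < size s) c i *: s`_i).
Variable f : {linear M -> qmod S}.

Let p (i : 'I_(size s)) : P := qval (f s`_i).

Let lincomb_bound := noetherian_lincomb_in_chain (@vanish_from0 A F)
  (@vanish_fromD A F) (@vanish_fromZ A F) (@vanish_from_mono A F) p noeth.
Let N := projT1 (cid lincomb_bound).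
Let vanish_N := projT2 (cid lincomb_bound).

Let coef x := projT1 (cid (gen_s x)).
Let coefE x : x = \sum_(i < size s) coef x i *: s`_i := projT2 (cid (gen_s x)).

Lemma qpi_lincomb c :
  qpi S (\sum_(i < size s) c i *: p i) = f (\sum_(i < size s) c i *: s`_i).
Proof. by rewrite !linear_sum; apply: eq_bigr => i _; rewrite !linearZ /= qvalK. Qed.

Lemma trunc_lincomb_eq c c' :
  \sum_(i < size s) c i *: s`_i = \sum_(i < size s) c' i *: s`_i ->
  trunc N (\sum_(i < size s) c i *: p i) = trunc N (\sum_(i < size s) c' i *: p i).
Proof.
move=> eq_cc'; apply/eqP; rewrite -subr_eq0 -linearB -sumrB.
under eq_bigr do rewrite -scalerBl.
apply/eqP/trunc_vanish/vanish_N.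
suff /qpi_dsumP : qpi S (\sum_(i < size s) (c i - c' i) *: p i) = qpi S 0.
  by rewrite subr0.
rewrite qpi_lincomb linear0; under eq_bigr do rewrite scalerBl.
by rewrite sumrB eq_cc' subrr linear0.
Qed.

Definition lift_fun x : P := trunc N (\sum_(i < size s) coef x i *: p i).

Fact lift_fun_is_linear : linear lift_fun.
Proof.
move=> a x y; rewrite /lift_fun.
rewrite (trunc_lincomb_eq (c' := fun i => a * coef x i + coef y i)).
  by rewrite -linearP scaler_sumr -big_split; congr (trunc N _);
    apply: eq_bigr => i _; rewrite scalerDl scalerA.
rewrite -coefE {1}(coefE x) {1}(coefE y) scaler_sumr -big_split.
by apply: eq_bigr => i _; rewrite scalerDl scalerA.
Qed.

HB.instance Definition _ :=
  GRing.isLinear.Build A M P *:%R lift_fun lift_fun_is_linear.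

Lemma qpi_lift_fun x : qpi S (lift_fun x) = f x.
Proof. by rewrite qpi_trunc qpi_lincomb -coefE. Qed.

End Lift.

Lemma lift_through_quot_dsum (A : comUnitRingType) (F : nat -> lmodType A)
    (M : lmodType A) (f : {linear M -> qmod (@dsum A F)}) :
  noetherian_ring A -> finitely_generated M ->
  exists g : {linear M -> dprod F}, forall x, qpi (@dsum A F) (g x) = f x.
Proof.
by move=> noeth [s gen_s]; exists (lift_fun noeth gen_s f); apply: qpi_lift_fun.
Qed.

Section HomIntoProduct.
Variables (A : comUnitRingType) (F : nat -> lmodType A) (M : lmodType A).
Local Notation P := (dprod F).
Local Notation S := (@dsum A F).
Hypotheses (noeth : noetherian_ring A) (fgM : finitely_generated M).
Variables (Phi : forall n, {linear M -> F n} -> F n)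
  (Phi_inv : forall n, F n -> {linear M -> F n}).
Arguments Phi : clear implicits.
Arguments Phi_inv : clear implicits.
Hypotheses (PhiK : forall n, cancel (Phi n) (Phi_inv n))
  (Phi_invK : forall n, cancel (Phi_inv n) (Phi n))
  (PhiD : forall n (f g h : {linear M -> F n}), (forall x, h x = f x + g x) ->
     Phi n h = Phi n f + Phi n g)
  (PhiZ : forall n (a : A) (f h : {linear M -> F n}), (forall x, h x = a *: f x) ->
     Phi n h = a *: Phi n f).

Lemma Phi0 n : Phi n (\0) = 0.
Proof.
apply/(addrI (Phi n (\0))); rewrite addr0 -(PhiD (h := \0)) // => x.
by rewrite addr0.
Qed.

Definition Phi_prod (g : {linear M -> P}) : P := fun n => Phi n (dproj n \o g).

Lemma Phi_prodD (g g' : {linear M -> P}) :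
  Phi_prod (g \+ g') = Phi_prod g + Phi_prod g'.
Proof.
by apply: functional_extensionality_dep => n; rewrite dprodD; apply: PhiD.
Qed.

Lemma Phi_prodB (g g' : {linear M -> P}) :
  Phi_prod (g \- g') = Phi_prod g - Phi_prod g'.
Proof.
have -> : Phi_prod g = Phi_prod (g \- g') + Phi_prod g'.
  by rewrite -Phi_prodD; congr Phi_prod; apply: linear_ext => x /=; rewrite subrK.
by rewrite addrK.
Qed.

Lemma Phi_prodZ a (g : {linear M -> P}) : Phi_prod (a \*: g) = a *: Phi_prod g.
Proof.
by apply: functional_extensionality_dep => n; rewrite dprodZ; apply: PhiZ.
Qed.

Lemma Phi_prod_dsum (g : {linear M -> P}) : (forall x, S (g x)) -> S (Phi_prod g).
Proof.
move=> Sg; have [N vanish_g] := fg_image_in_chain (@vanish_from0 A F)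
  (@vanish_fromD A F) (@vanish_fromZ A F) (@vanish_from_mono A F) fgM Sg.
exists N => n le_Nn; rewrite -(Phi0 n) /Phi_prod; congr (Phi n).
by apply: linear_ext => x /=; apply: vanish_g.
Qed.

Definition Phi_inv_prod (y : P) (x : M) : P := fun n => Phi_inv n (y n) x.

Fact Phi_inv_prod_is_linear y : linear (Phi_inv_prod y).
Proof.
move=> a x x'; apply: functional_extensionality_dep => n.
by rewrite /Phi_inv_prod dprodD dprodZ linearP.
Qed.

HB.instance Definition _ y :=
  GRing.isLinear.Build A M P *:%R (Phi_inv_prod y) (Phi_inv_prod_is_linear y).

Lemma Phi_inv_prodK y : Phi_prod (Phi_inv_prod y) = y.
Proof.
apply: functional_extensionality_dep => n; rewrite -[RHS](@Phi_invK n).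
by congr (Phi n); apply: linear_ext.
Qed.

Lemma Phi_inv_prod_dsum y y' x :
  S (y - y') -> S (Phi_inv_prod y x - Phi_inv_prod y' x).
Proof.
move=> [N vanish_y]; exists N => n /vanish_y /eqP.
by rewrite !dprodB subr_eq0 /Phi_inv_prod => /eqP ->; rewrite subrr.
Qed.

Lemma qpi_Phi_prod_eq (g g' : {linear M -> P}) :
  (forall x, qpi S (g x) = qpi S (g' x)) -> qpi S (Phi_prod g) = qpi S (Phi_prod g').
Proof.
move=> eq_gg'; apply/qpi_dsumP; rewrite -Phi_prodB.
by apply: Phi_prod_dsum => x; apply/qpi_dsumP.
Qed.

Definition lift (f : {linear M -> qmod S}) : {linear M -> P} :=
  projT1 (cid (lift_through_quot_dsum f noeth fgM)).

Lemma qpi_lift (f : {linear M -> qmod S}) x : qpi S (lift f x) = f x.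
Proof. exact: (projT2 (cid (lift_through_quot_dsum f noeth fgM))). Qed.

Definition Psi (f : {linear M -> qmod S}) : qmod S := qpi S (Phi_prod (lift f)).

Lemma PsiE (f : {linear M -> qmod S}) (g : {linear M -> P}) :
  (forall x, qpi S (g x) = f x) -> Psi f = qpi S (Phi_prod g).
Proof. by move=> gE; apply: qpi_Phi_prod_eq => x; rewrite gE qpi_lift. Qed.

Lemma PsiD (f f' h : {linear M -> qmod S}) : (forall x, h x = f x + f' x) ->
  Psi h = Psi f + Psi f'.
Proof.
move=> hE; rewrite (@PsiE h (lift f \+ lift f')) ?Phi_prodD ?linearD //.
by move=> x; rewrite hE -!qpi_lift -linearD.
Qed.

Lemma PsiZ a (f h : {linear M -> qmod S}) : (forall x, h x = a *: f x) ->
  Psi h = a *: Psi f.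
Proof.
move=> hE; rewrite (@PsiE h (a \*: lift f)) ?Phi_prodZ ?linearZ //.
by move=> x; rewrite hE -qpi_lift -linearZ.
Qed.

Definition Psi_inv (y : qmod S) : {linear M -> qmod S} :=
  qpi S \o Phi_inv_prod (qval y).

Lemma Psi_bij : bijective Psi.
Proof.
exists Psi_inv => [f | y].
  apply: linear_ext => x; rewrite -[RHS]qpi_lift /=; apply/qpi_dsumP.
  have -> : lift f x = Phi_inv_prod (Phi_prod (lift f)) x.
    by apply: functional_extensionality_dep => n; rewrite /Phi_inv_prod PhiK.
  by apply/Phi_inv_prod_dsum/qpi_dsumP; exact: qvalK (Psi f).
by rewrite (@PsiE _ (Phi_inv_prod (qval y))) // Phi_inv_prodK qvalK.
Qed.

End HomIntoProduct.

Theorem hom_iso_self_quot_dsum (A : comUnitRingType) (F : nat -> lmodType A)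
    (M : lmodType A) :
  noetherian_ring A -> finitely_generated M ->
  (forall n, hom_iso_self M (F n)) -> hom_iso_self M (qmod (@dsum A F)).
Proof.
move=> noeth fgM isoF.
pose Phi n := projT1 (cid (isoF n)).
have PhiP n := projT2 (cid (isoF n)).
have /all_sig [Phi_inv Phi_invP] :
    forall n, {g | cancel (Phi n) g /\ cancel g (Phi n)}.
  by move=> n; apply: cid; case: (PhiP n).1 => g; exists g.
have PhiD n := (PhiP n).2.1; have PhiZ n := (PhiP n).2.2.
exists (Psi noeth fgM Phi); split; last split.
- exact: Psi_bij (fun n => (Phi_invP n).1) (fun n => (Phi_invP n).2) PhiD.
- exact: PsiD PhiD.
- exact: PsiZ PhiD PhiZ.
Qed.

Theorem proposition2p7 (A : idomainType) (m : A -> Prop)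
    (I : nat -> A -> Prop) (M : lmodType A) :
  local_ring_with m -> noetherian_ring A -> normal_domain A ->
  (forall n, is_prime_ideal (I n)) ->
  (forall n, exists x, I n x /\ x != 0) ->
  madic_lim0 m I ->
  finitely_generated M ->
  (forall n, hom_iso_self M (quot_ring_mod (I n))) ->
  let P := dprod (fun n => quot_ring_mod (I n)) in
  let S : P -> Prop := @dsum A (fun n => quot_ring_mod (I n)) in
  hom_iso_self M (@qmod A P S).
Proof.
(* The remaining hypotheses are what the paper uses to obtain the
   isomorphisms Hom(M, A/I_n) = A/I_n, which are assumed here. *)
move=> _ noeth _ _ _ _ fgM isoI P S.
exact: hom_iso_self_quot_dsum noeth fgM isoI.
Qed.
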